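(* Let $\mathcal X\subseteq\mathcal P(\omega)$ be a family of nonempty sets and let $\mathcal Z\subseteq\mathcal P(\omega)$ be closed under supersets. Then the games $\mathfrak G(\mathcal X,\omega,\mathcal Z^c)$ and $\mathfrak G(\mathcal X,[\omega]^{<\omega},\mathcal Z^c)$ are equivalent: a player has a winning strategy in one game if and only if the same player has a winning strategy in the other.
   Context: $\mathcal Z^c=\mathcal P(\omega)\setminus\mathcal Z$. Game $\mathfrak G(\mathcal X,\omega,\mathcal W)$: at each stage $k\in\omega$, player I chooses $X_k\in\mathcal X$ and player II responds with $n_k\in X_k$; II wins if $\{n_k:k\in\omega\}\in\mathcal W$. Game $\mathfrak G(\mathcal X,[\omega]^{<\omega},\mathcal W)$: at each stage $k$, player I chooses $X_k\in\mathcal X$ and player II responds with a nonempty finite set $s_k\subseteq X_k$; II wins if $\bigcup_k s_k\in\mathcal W$. In each game I wins when II does not. *)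

From Stdlib Require Import List.
Import ListNotations.

Definition subset_omega := nat -> Prop.
Definition family := subset_omega -> Prop.

(* A generic game G(X, M, W): at stage k, player I plays X_k in X, player II
   answers a move m_k : M with [legal X_k m_k]; II wins iff
   [W (outcome (fun k => m_k))]. *)

Definition hist {M : Type} (Xs : nat -> subset_omega) (ms : nat -> M) (k : nat)
  : list (subset_omega * M) :=
  map (fun i => (Xs i, ms i)) (seq 0 k).

Definition I_wins {M : Type} (X : family) (legal : subset_omega -> M -> Prop)
    (outcome : (nat -> M) -> subset_omega) (W : family) : Prop :=
  exists sigma : list (subset_omega * M) -> subset_omega,
    (forall h, X (sigma h)) /\
    forall (Xs : nat -> subset_omega) (ms : nat -> M),
      (forall k, Xs k = sigma (hist Xs ms k)) ->
      (forall k, legal (Xs k) (ms k)) ->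
      ~ W (outcome ms).

Definition II_wins {M : Type} (X : family) (legal : subset_omega -> M -> Prop)
    (outcome : (nat -> M) -> subset_omega) (W : family) : Prop :=
  exists tau : list (subset_omega * M) -> subset_omega -> M,
    (forall h A, X A -> legal A (tau h A)) /\
    forall (Xs : nat -> subset_omega) (ms : nat -> M),
      (forall k, X (Xs k)) ->
      (forall k, ms k = tau (hist Xs ms k) (Xs k)) ->
      W (outcome ms).

(* Game G(X, omega, W): II answers with n_k in X_k; outcome {n_k : k}. *)
Definition legal_pt (A : subset_omega) (n : nat) : Prop := A n.
Definition outcome_pt (ns : nat -> nat) : subset_omega :=
  fun m => exists k, ns k = m.

(* Game G(X, [omega]^<omega, W): II answers with a nonempty finite s_k
   subset of X_k (a list); outcome is the union of the s_k. *)
Definition legal_fin (A : subset_omega) (s : list nat) : Prop :=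
  s <> [] /\ forall m, In m s -> A m.
Definition outcome_fin (ss : nat -> list nat) : subset_omega :=
  fun m => exists k, In m (ss k).

Definition upward_closed (Z : family) : Prop :=
  forall A B : subset_omega, Z A -> (forall n, A n -> B n) -> Z B.

Definition complement (Z : family) : family := fun A => ~ Z A.

(* Each game is simulated inside the other move by move: a point [n] is played
   as the singleton [[n]], and a finite set [s] is replaced by its point
   [hd 0 s].  Under either translation the outcome of the simulated play is
   contained in that of the real play when I simulates, and contains it when
   II simulates; as [Z] is upward closed, the simulating player wins the real
   play whenever the strategy wins the simulated one.  Since [hd 0] forgets
   information, II does not translate the history back but replays his
   strategy along it. *)

From Stdlib Require Import List.
Import ListNotations.

Lemma hist_S {M : Type} (Xs : nat -> subset_omega) (ms : nat -> M) (k : nat) :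
  hist Xs ms (S k) = hist Xs ms k ++ [(Xs k, ms k)].
Proof. unfold hist. now rewrite seq_S, map_app. Qed.

Definition map_moves {M N : Type} (f : M -> N) :
  list (subset_omega * M) -> list (subset_omega * N) :=
  map (fun p => (fst p, f (snd p))).

Lemma map_moves_hist {M N : Type} (f : M -> N) (Xs : nat -> subset_omega)
    (ms : nat -> M) (k : nat) :
  map_moves f (hist Xs ms k) = hist Xs (fun i => f (ms i)) k.
Proof. unfold map_moves, hist. now rewrite map_map. Qed.

(* The history II would have produced had he answered every set of the given
   history with [tau]. *)
Definition replay {M N : Type} (tau : list (subset_omega * M) -> subset_omega -> M)
    (h : list (subset_omega * N)) : list (subset_omega * M) :=
  fold_left (fun acc p => acc ++ [(fst p, tau acc (fst p))]) h [].

Lemma replay_snoc {M N : Type} (tau : list (subset_omega * M) -> subset_omega -> M)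
    (h : list (subset_omega * N)) (p : subset_omega * N) :
  replay tau (h ++ [p]) = replay tau h ++ [(fst p, tau (replay tau h) (fst p))].
Proof. unfold replay. now rewrite fold_left_app. Qed.

Lemma replay_hist {M N : Type} (tau : list (subset_omega * M) -> subset_omega -> M)
    (Xs : nat -> subset_omega) (ns : nat -> N) (k : nat) :
  replay tau (hist Xs ns k) =
  hist Xs (fun i => tau (replay tau (hist Xs ns i)) (Xs i)) k.
Proof.
  induction k as [|k IH]; [reflexivity|].
  now rewrite !hist_S, replay_snoc, IH.
Qed.

Section Transfer.

Variables (M N : Type) (X Z : family).
Hypothesis hZ : upward_closed Z.
Variables (legal_M : subset_omega -> M -> Prop) (out_M : (nat -> M) -> subset_omega).
Variables (legal_N : subset_omega -> N -> Prop) (out_N : (nat -> N) -> subset_omega).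

Lemma I_wins_transfer (f : N -> M)
    (legal_f : forall A n, legal_N A n -> legal_M A (f n))
    (out_f : forall As ns ms, (forall k, legal_N (As k) (ns k)) ->
       (forall k, ms k = f (ns k)) -> forall m, out_M ms m -> out_N ns m) :
  I_wins X legal_M out_M (complement Z) -> I_wins X legal_N out_N (complement Z).
Proof.
  intros [sigma [sigma_X sigma_wins]].
  exists (fun h => sigma (map_moves f h)); split; [auto|].
  intros Xs ns play legal notZ.
  apply (sigma_wins Xs (fun k => f (ns k))).
  - intro k. now rewrite play, map_moves_hist.
  - intro k. apply legal_f, legal.
  - intro inZ. apply notZ, (hZ _ _ inZ), (out_f Xs ns _ legal); reflexivity.
Qed.

Lemma II_wins_transfer (g : M -> N)
    (legal_g : forall A m, legal_M A m -> legal_N A (g m))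
    (out_g : forall As ms ns, (forall k, legal_M (As k) (ms k)) ->
       (forall k, ns k = g (ms k)) -> forall m, out_N ns m -> out_M ms m) :
  II_wins X legal_M out_M (complement Z) -> II_wins X legal_N out_N (complement Z).
Proof.
  intros [tau [tau_legal tau_wins]].
  exists (fun h A => g (tau (replay tau h) A)); split; [auto|].
  intros Xs ns Xs_X play inZ.
  set (ms := fun k => tau (replay tau (hist Xs ns k)) (Xs k)).
  assert (ms_legal : forall k, legal_M (Xs k) (ms k)) by (intro k; apply tau_legal, Xs_X).
  apply (tau_wins Xs ms Xs_X).
  - intro k. unfold ms at 1. now rewrite replay_hist.
  - apply (hZ _ _ inZ), (out_g Xs ms ns ms_legal), play.
Qed.

End Transfer.

Lemma legal_fin_hd (A : subset_omega) (s : list nat) :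
  legal_fin A s -> legal_pt A (hd 0 s).
Proof. destruct s as [|n s]; intros [s_ne s_A]; [congruence|]. apply s_A; now left. Qed.

Lemma legal_pt_singleton (A : subset_omega) (n : nat) :
  legal_pt A n -> legal_fin A [n].
Proof. intro An. split; [discriminate|]. now intros m [<-|[]]. Qed.

Lemma outcome_pt_hd_sub (As : nat -> subset_omega) (ss : nat -> list nat)
    (ns : nat -> nat) :
  (forall k, legal_fin (As k) (ss k)) -> (forall k, ns k = hd 0 (ss k)) ->
  forall m, outcome_pt ns m -> outcome_fin ss m.
Proof.
  intros legal ns_hd m [k <-]. exists k. rewrite ns_hd.
  destruct (legal k) as [ss_ne _]. destruct (ss k); [congruence|]. now left.
Qed.

Lemma outcome_fin_singleton_sub (ns : nat -> nat) (ss : nat -> list nat) :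
  (forall k, ss k = [ns k]) -> forall m, outcome_fin ss m -> outcome_pt ns m.
Proof. intros ss_ns m [k in_m]. exists k. rewrite ss_ns in in_m. now destruct in_m as [->|[]]. Qed.

Theorem lemma3p1 (X Z : family)
  (hX : forall A, X A -> exists n, A n)
  (hZ : upward_closed Z) :
  (I_wins X legal_pt outcome_pt (complement Z) <->
   I_wins X legal_fin outcome_fin (complement Z)) /\
  (II_wins X legal_pt outcome_pt (complement Z) <->
   II_wins X legal_fin outcome_fin (complement Z)).
Proof.
  split; split.
  - apply (I_wins_transfer _ _ X Z hZ _ _ _ _ (hd 0)); [apply legal_fin_hd|].
    intros As ss ns legal ns_hd. now apply (outcome_pt_hd_sub As).
  - apply (I_wins_transfer _ _ X Z hZ _ _ _ _ (fun n => [n])); [apply legal_pt_singleton|].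
    intros As ns ss _ ss_ns. now apply outcome_fin_singleton_sub.
  - apply (II_wins_transfer _ _ X Z hZ _ _ _ _ (fun n => [n])); [apply legal_pt_singleton|].
    intros As ns ss _ ss_ns. now apply outcome_fin_singleton_sub.
  - apply (II_wins_transfer _ _ X Z hZ _ _ _ _ (hd 0)); [apply legal_fin_hd|].
    intros As ss ns legal ns_hd. now apply (outcome_pt_hd_sub As).
Qed.
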